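(* Let $\Omega$ be a bounded measurable set in $\mathbb{R}^d$, let $\mu$ be a positive, locally finite Borel measure on $\mathbb{R}^d$, and let $\Sigma\subset\mathbb{R}^d$ be measurable. Suppose $\mathbf{1}_\Omega\ast\mu=0$ a.e. on $\Sigma^c=\mathbb{R}^d\setminus\Sigma$. Then $m((\Omega+t)\cap\Sigma^c)=0$ for every $t\in\operatorname{supp}(\mu)$.
   Context: $m$ is Lebesgue measure, $\operatorname{supp}(\mu)$ the closed support of $\mu$. *)

From HB Require Import structures.
From mathcomp Require Import all_boot all_order all_algebra.
From mathcomp Require Import all_classical all_reals all_analysis.
Set Implicit Arguments. Unset Strict Implicit. Unset Printing Implicit Defensive.
Import Order.TTheory GRing.Theory Num.Theory.
Import numFieldNormedType.Exports.
Local Open Scope classical_set_scope.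
Local Open Scope ring_scope.

Definition Rd (R : realType) (d : nat) := g_sigma_algebraType (@open 'rV[R]_d).

Definition box (R : realType) (d : nat) (a b : 'rV[R]_d) : set 'rV[R]_d :=
  [set x | forall i, a 0 i <= x 0 i <= b 0 i].
Definition box_vol (R : realType) (d : nat) (a b : 'rV[R]_d) : R :=
  \prod_(i < d) (b 0 i - a 0 i).

(* Lebesgue-null sets: m(A) = 0 for the Lebesgue (outer) measure m on R^d,
   i.e. A can be covered by countably many boxes of arbitrarily small total
   volume. *)
Definition lebesgue_null (R : realType) (d : nat) (A : set 'rV[R]_d) : Prop :=
  forall eps : R, 0 < eps ->
    exists a b : nat -> 'rV[R]_d,
      [/\ forall n i, a n 0 i <= b n 0 i,
          A `<=` \bigcup_n box (a n) (b n) &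
          (\sum_(0 <= n <oo) (box_vol (a n) (b n))%:E < eps%:E)%E].

Definition locally_finite (R : realType) (d : nat)
    (mu : {measure set (Rd R d) -> \bar R}) : Prop :=
  forall x : 'rV[R]_d, exists U : set 'rV[R]_d,
    [/\ open U, U x & (mu U < +oo)%E].

Definition msupport (R : realType) (d : nat)
    (mu : {measure set (Rd R d) -> \bar R}) : set 'rV[R]_d :=
  [set t | forall U : set 'rV[R]_d, open U -> U t -> (0 < mu U)%E].

Definition conv_ind (R : realType) (d : nat)
    (mu : {measure set (Rd R d) -> \bar R}) (Om : set 'rV[R]_d)
    (x : 'rV[R]_d) : \bar R :=
  (\int[mu]_(y in [set: Rd R d]) (\1_Om (x - (y : 'rV[R]_d)) : R)%:E)%E.

Definition translate (R : realType) (d : nat) (Om : set 'rV[R]_d) (t : 'rV[R]_d)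
  : set 'rV[R]_d := [set x + t | x in Om].

(* Let B be the set of points of the complement of Sigma where 1_Omega * mu
   vanishes, and psi(y) = m(B ∩ (Omega + y)).  Tonelli's theorem for the
   indicator of {(x, y) | x ∈ B, x - y ∈ Omega} gives
   ∫ psi dmu = ∫_B (1_Omega * mu) dm = 0, so psi = 0 mu-almost everywhere.
   Since m(Omega \ (Omega + h)) -> 0 as h -> 0 (approximate Omega by finitely
   many boxes), psi(t) <= psi(y) + m(Omega \ (Omega + (y - t))) is small for
   y near t; a neighbourhood of a point of supp(mu) has positive mu-measure,
   so it contains some y with psi(y) = 0, whence psi(t) = 0.  Finally
   (Omega + t) \ Sigma is covered by the null set where 1_Omega * mu does not
   vanish and by B ∩ (Omega + t).
   Lebesgue measure on R^d is obtained from countable box covers by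
   Caratheodory's construction: half-spaces, hence all Borel sets, are
   measurable. *)

From HB Require Import structures.
From mathcomp Require Import all_boot all_order all_algebra.
From mathcomp Require Import all_classical all_reals all_analysis.
From mathcomp Require Import measurable_realfun lra ring.
Import Order.TTheory GRing.Theory Num.Theory.
Import numFieldNormedType.Exports.
Set Implicit Arguments. Unset Strict Implicit. Unset Printing Implicit Defensive.
Local Open Scope classical_set_scope.
Local Open Scope ring_scope.

Lemma open_measurable_rV (R : realType) n (A : set 'rV[R]_n) :
  open A -> measurable (A : set (Rd R n)).
Proof. by move=> oA; apply: sub_sigma_algebra. Qed.

Section box_outer_measure.
Variables (R : realType) (d : nat).
Local Notation V := 'rV[R]_d.+1.
Local Notation T := (Rd R d.+1).

Definition coord_le (a b : V) := forall i, a 0 i <= b 0 i.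

Lemma box_vol_ge0 (a b : V) : coord_le a b -> 0 <= box_vol a b.
Proof. by move=> ab; apply: prodr_ge0 => i _; rewrite subr_ge0. Qed.

Lemma box_vol_diag (a : V) : box_vol a a = 0.
Proof. by rewrite /box_vol big_ord_recl subrr mul0r. Qed.

Lemma box_closed (a b : V) : closed (box a b).
Proof.
have -> : box a b = \bigcap_i ((fun x : V => x 0 i) @^-1` `[a 0 i, b 0 i]).
  apply/seteqP; split => x h i; first by move=> _; rewrite /= in_itv; exact: h.
  by have := h i I; rewrite /= in_itv.
apply: closed_bigI => i _; apply: preimage_closed; last exact: itv_closed.
by move=> x _; exact: coord_continuous.
Qed.

Lemma box_measurable (a b : V) : measurable (box a b : set T).
Proof.
rewrite -[box a b]setCK; apply: measurableC; apply: open_measurable_rV.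
by rewrite openC; exact: box_closed.
Qed.

Lemma translateK (A : set V) (h : V) : translate (translate A h) (- h) = A.
Proof.
apply/seteqP; split=> [_ [_ [x Ax <-] <-]|x Ax]; first by rewrite addrK.
by exists (x + h); [exists x | rewrite addrK].
Qed.

Definition box_cover (A : set V) (F : nat -> V * V) :=
  (forall n, coord_le (F n).1 (F n).2) /\ A `<=` \bigcup_n box (F n).1 (F n).2.

Local Open Scope ereal_scope.

Definition cover_vol (F : nat -> V * V) : \bar R :=
  \sum_(n <oo) (box_vol (F n).1 (F n).2)%:E.

Definition hull_vol (A : set T) : \bar R :=
  ereal_inf [set (box_vol p.1 p.2)%:E |
             p in [set p : V * V | coord_le p.1 p.2 /\ A `<=` box p.1 p.2]].

Lemma hull_vol_ge0 (A : set T) : 0 <= hull_vol A.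
Proof. by apply: le_ereal_inf_tmp => _ [p [p12 _] <-]; rewrite lee_fin box_vol_ge0. Qed.

Lemma hull_vol_box (a b : V) : coord_le a b -> hull_vol (box a b) <= (box_vol a b)%:E.
Proof. by move=> ab; apply: ereal_inf_lbound; exists (a, b) => //; split. Qed.

Lemma hull_vol0 : hull_vol set0 = 0.
Proof.
apply/eqP; rewrite eq_le hull_vol_ge0 andbT; apply: ereal_inf_lbound.
by exists (0%R, 0%R); [split => // i; exact: lexx | rewrite box_vol_diag].
Qed.

(* The outer-measure axioms come from [mu_ext]; by [lebesgue_outer_le_cover]
   and [lebesgue_outer_ge_covers] this is the infimum of the volumes of
   countable box covers. *)
Definition lebesgue_outer : set T -> \bar R := mu_ext hull_vol.
Local Notation lam := lebesgue_outer.

HB.instance Definition _ := isOuterMeasure.Build R T lam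
  (mu_ext0 hull_vol0 hull_vol_ge0) (mu_ext_ge0 hull_vol_ge0) (le_mu_ext hull_vol)
  (mu_ext_sigma_subadditive hull_vol_ge0).

Lemma lebesgue_outer_le_cover (A : set V) F : box_cover A F -> lam A <= cover_vol F.
Proof.
move=> [F12 AF]; apply: le_trans (ereal_inf_lbound _) _.
  by exists (fun n => box (F n).1 (F n).2) => //; split=> // n; exact: box_measurable.
by apply: lee_nneseries => [n _ _|n _]; [exact: hull_vol_ge0 | exact: hull_vol_box].
Qed.

(* Enlarge the k-th set of a measurable cover to a box, at a cost of e / 2^(k+1). *)
Lemma lebesgue_outer_ge_covers (A : set V) y :
  (forall F, box_cover A F -> y <= cover_vol F) -> y <= lam A.
Proof.
move=> yF; apply: le_ereal_inf_tmp => _ [G [mG AG] <-].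
have [->|Gfin] := eqVneq (\sum_(k <oo) hull_vol (G k)) +oo; first by rewrite leey.
apply/lee_addgt0Pr => e e0.
have Gkfin k : hull_vol (G k) \is a fin_num.
  rewrite ge0_fin_numE ?hull_vol_ge0 // ltey; apply/eqP => Gk.
  move: Gfin; rewrite (eseries_pinfty _ _ Gk) ?eqxx //.
  by move=> n _; rewrite gt_eqF // (lt_le_trans _ (hull_vol_ge0 _)) ?ltNy0.
have /choice[p hp] k : exists p : V * V, (coord_le p.1 p.2 /\ G k `<=` box p.1 p.2)
    /\ (box_vol p.1 p.2)%:E < hull_vol (G k) + (e / (2 ^ k.+1)%:R)%:E.
  have : hull_vol (G k) < hull_vol (G k) + (e / (2 ^ k.+1)%:R)%:E.
    by rewrite lteDl // lte_fin divr_gt0 // exprn_gt0.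
  by move=> /ereal_inf_lt[_ [p Gp <-] ?]; exists p.
have Ap : box_cover A p.
  by split=> [n|x /AG[k _ /(hp k).1.2 ?]]; [exact: (hp n).1.1 | exists k].
apply: le_trans (yF p Ap) _.
apply: le_trans (epsilon_trick _ (fun n => hull_vol_ge0 (G n)) (ltW e0)).
apply: lee_nneseries => [n _ _|n _]; last exact: ltW (hp n).2.
by rewrite lee_fin box_vol_ge0 //; exact: (hp n).1.1.
Qed.

Lemma lebesgue_outer_gt_cover (A : set V) x :
  lam A < x -> exists2 F, box_cover A F & cover_vol F < x.
Proof.
move=> Ax; have [//|noF] := pselect (exists2 F, box_cover A F & cover_vol F < x).
exfalso; move: Ax; rewrite ltNge => /negP; apply; apply: lebesgue_outer_ge_covers => F AF.
by rewrite leNgt; apply/negP => Fx; apply: noF; exists F.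
Qed.

Lemma lebesgue_nullE (A : set V) : lebesgue_null A <-> lam A = 0.
Proof.
split=> [nA|A0 e e0].
  apply/eqP; rewrite eq_le outer_measure_ge0 andbT; apply/lee_addgt0Pr => e e0.
  have [a [b [ab AF Fe]]] := nA e e0.
  rewrite add0e; apply: le_trans (ltW Fe).
  by apply: (lebesgue_outer_le_cover (F := fun n => (a n, b n))); split.
have /lebesgue_outer_gt_cover[F [F12 AF] Fe] : lam A < e%:E by rewrite A0 lte_fin.
by exists (fun n => (F n).1), (fun n => (F n).2).
Qed.

Lemma lebesgue_outer_box (a b : V) : coord_le a b -> lam (box a b) <= (box_vol a b)%:E.
Proof.
move=> ab; pose F n : V * V := (a, if n == 0%N then b else a).
have -> : (box_vol a b)%:E = cover_vol F.
  rewrite /cover_vol (nneseries_split 0 1); last first.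
    move=> n _; rewrite lee_fin /F.
    by case: ifP => _; [exact: box_vol_ge0 | rewrite box_vol_diag].
  by rewrite big_nat1 eseries0 ?adde0 // => -[|n] // _ _; rewrite /F box_vol_diag.
by apply: lebesgue_outer_le_cover; split=> [[|n] i|x abx]; [|exact: lexx|exists 0%N].
Qed.

Lemma le_lebesgue_outer_translate (A : set V) (h : V) : lam (translate A h) <= lam A.
Proof.
apply: lebesgue_outer_ge_covers => F [F12 AF].
pose G n := (((F n).1 + h)%R, ((F n).2 + h)%R).
have -> : cover_vol F = cover_vol G.
  apply: eq_eseriesr => n _; congr EFin; apply: eq_bigr => i _.
  by rewrite !mxE opprD addrACA subrr addr0.
apply: lebesgue_outer_le_cover; split=> [n i|_ [x /AF[n _ Fx] <-]].
  by rewrite !mxE lerD2r; exact: F12.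
by exists n => // i; rewrite !mxE !lerD2r; exact: Fx.
Qed.

Lemma lebesgue_outer_translate (A : set V) (h : V) : lam (translate A h) = lam A.
Proof.
apply/eqP; rewrite eq_le le_lebesgue_outer_translate /=.
by rewrite -{1}(translateK A h) le_lebesgue_outer_translate.
Qed.

End box_outer_measure.

Section rational_boxes.
Variables (R : realType) (n : nat).
Local Notation V := 'rV[R]_n.

Lemma ball_coord (x y : V) (e : R) : ball x e y -> forall i, `|x 0 i - y 0 i| < e.
Proof. by move=> [_ xy] i; exact: xy. Qed.

Lemma coord_ball (x y : V) (e : R) :
  0 < e -> (forall i, `|x 0 i - y 0 i| < e) -> ball x e y.
Proof. by move=> e0 xy; split => // i j; rewrite (ord1 i); exact: xy. Qed.

Definition obox (a b : V) : set V := [set x | forall i, a 0 i < x 0 i < b 0 i].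

Lemma open_obox (a b : V) : open (obox a b).
Proof.
have -> : obox a b =
    \bigcap_(i in [set: 'I_n]) ((fun x : V => x 0 i) @^-1` `]a 0 i, b 0 i[).
  apply/seteqP; split => x xab i; first by move=> _; rewrite /= in_itv; exact: xab.
  by have := xab i I; rewrite /= in_itv.
rewrite -[X in open X]setCK setC_bigcap openC.
apply: closed_bigcup => [|i _]; first exact: finite_finset.
rewrite closedC; apply: open_comp; last exact: itv_open.
by move=> x _; exact: coord_continuous.
Qed.

Definition ratv (q : 'rV[rat]_n) : V := map_mx ratr q.

Definition rat_obox (q : 'rV[rat]_n * 'rV[rat]_n) : set V := obox (ratv q.1) (ratv q.2).

Lemma rat_obox_ball (x : V) (r : R) : 0 < r ->
  exists q, rat_obox q x /\ rat_obox q `<=` ball x r.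
Proof.
move=> r0.
have /choice[qa qaP] i : exists q : rat, ratr q \in `](x 0 i - r), (x 0 i)[.
  by apply: rat_in_itvoo; rewrite gtrBl.
have /choice[qb qbP] i : exists q : rat, ratr q \in `](x 0 i), (x 0 i + r)[.
  by apply: rat_in_itvoo; rewrite ltrDl.
exists (\row_i qa i, \row_i qb i); split => [i|y qy].
  by have := qaP i; have := qbP i; rewrite !in_itv /= !mxE => /andP[-> _] /andP[_ ->].
apply: coord_ball => // i; have := qy i; rewrite !mxE => /andP[ay yb].
have := qaP i; have := qbP i; rewrite !in_itv /= => /andP[_ ?] /andP[? _].
by rewrite ltr_norml; apply/andP; split; lra.
Qed.

Lemma open_bigcup_rat_obox (O : set V) : open O ->
  O = \bigcup_(q in [set q | rat_obox q `<=` O]) rat_obox q.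
Proof.
move=> oO; apply/seteqP; split => [x Ox|x [q qO /qO]] //.
have /nbhs_ballP[r r0 rO] : nbhs x O by exact: open_nbhs_nbhs.
by have [q [qx qr]] := rat_obox_ball x r0; exists q => //; apply: subset_trans qr rO.
Qed.

End rational_boxes.

Section lebesgue_measure_rV.
Variables (R : realType) (d : nat).
Local Notation V := 'rV[R]_d.+1.
Local Notation T := (Rd R d.+1).
Local Notation lam := (@lebesgue_outer R d).

Definition map_coord (v : V) (i : 'I_d.+1) (f : R -> R) : V :=
  \row_j (if j == i then f (v 0 j) else v 0 j).

Lemma map_coordE v i f j : map_coord v i f 0 j = if j == i then f (v 0 j) else v 0 j.
Proof. by rewrite mxE. Qed.

Lemma map_coord_id v i : map_coord v i id = v.
Proof. by apply/rowP => j; rewrite map_coordE; case: ifP. Qed.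

Lemma box_vol_map_coord (a b : V) i f g :
  box_vol (map_coord a i f) (map_coord b i g) =
  (g (b 0 i) - f (a 0 i)) * \prod_(j < d.+1 | j != i) (b 0 j - a 0 j).
Proof.
rewrite /box_vol (bigD1 i) //= !map_coordE eqxx; congr (_ * _).
by apply: eq_bigr => j /negbTE ji; rewrite !map_coordE ji.
Qed.

Definition halfspace (i : 'I_d.+1) (c : R) : set V := [set x | x 0 i <= c].

Lemma box_vol_cut (a b : V) i c :
  box_vol a b = box_vol (map_coord a i (Num.min ^~ c)) (map_coord b i (Num.min ^~ c))
              + box_vol (map_coord a i (Num.max ^~ c)) (map_coord b i (Num.max ^~ c)).
Proof.
rewrite !box_vol_map_coord -mulrDl /box_vol (bigD1 i) //=; congr (_ * _).
by have := addr_min_max (a 0 i) c; have := addr_min_max (b 0 i) c; lra.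
Qed.

Lemma halfspace_caratheodory i c : lam.-cara.-measurable (halfspace i c).
Proof.
apply: le_caratheodory_measurable => X.
apply: lebesgue_outer_ge_covers => F [F12 XF].
pose cut (m : R -> R -> R) n :=
  (map_coord (F n).1 i (m ^~ c), map_coord (F n).2 i (m ^~ c)).
have cut12 m n : {homo m ^~ c : x y / x <= y} -> coord_le (cut m n).1 (cut m n).2.
  by move=> mh j; rewrite !map_coordE; case: ifP => _; [apply: mh|]; exact: F12.
have -> : cover_vol F = cover_vol (cut Num.min) + cover_vol (cut Num.max).
  rewrite /cover_vol -nneseriesD => [|n _ _|n _ _]; last 2 first.
  - by rewrite lee_fin box_vol_ge0 //; apply: cut12 => x y xy; exact: le_min2.
  - by rewrite lee_fin box_vol_ge0 //; apply: cut12 => x y xy; exact: le_max2.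
  by apply: eq_eseriesr => n _; rewrite (box_vol_cut _ _ i c) EFinD.
apply: leeD; apply: lebesgue_outer_le_cover.
  split=> [n|x [/XF[n _ Fx] xc]]; first by apply: cut12 => x y xy; exact: le_min2.
  exists n => // j; rewrite !map_coordE; case: ifP => [/eqP ->|_]; last exact: Fx.
  by rewrite ge_min le_min; have /andP[-> ->] := Fx i; rewrite /= xc.
split=> [n|x [/XF[n _ Fx] xc]]; first by apply: cut12 => x y xy; exact: le_max2.
exists n => // j; rewrite !map_coordE; case: ifP => [/eqP ->|_]; last exact: Fx.
have {}xc : c < x 0 i by rewrite ltNge; apply/negP.
by rewrite ge_max le_max; have /andP[-> ->] := Fx i; rewrite ltW.
Qed.

Lemma obox_caratheodory (a b : V) : lam.-cara.-measurable (obox a b).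
Proof.
have -> : obox a b = \bigcap_(i in [set: 'I_d.+1])
    (~` halfspace i (a 0 i) `&` \bigcup_n halfspace i (b 0 i - n.+1%:R^-1)).
  apply/seteqP; split=> [x xab i _|x xab i].
    have /andP[ax xb] := xab i; split; first by apply/negP; rewrite -ltNge.
    have /ltr_add_invr[k xk] : 0 < b 0 i - x 0 i by rewrite subr_gt0.
    by exists k => //; move: xk; rewrite /halfspace /=; set u := _^-1 => xk; lra.
  have [/negP ax [k _ xb]] := xab i I; rewrite -ltNge in ax; rewrite ax /=.
  by apply: le_lt_trans xb _; rewrite gtrDl oppr_lt0 invr_gt0.
apply: fin_bigcap_measurable => [|i _]; first exact: finite_finset.
apply: measurableI; first exact/measurableC/halfspace_caratheodory.
by apply: bigcupT_measurable => k; exact: halfspace_caratheodory.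
Qed.

Lemma open_caratheodory (O : set V) : open O -> lam.-cara.-measurable O.
Proof.
move=> oO; rewrite (open_bigcup_rat_obox oO) bigcup_mkcond.
apply: countable_bigcupT_measurable => [|q]; first exact: countableP.
by case: ifP => _; [exact: obox_caratheodory | exact: measurable0].
Qed.

Lemma measurable_caratheodory (A : set T) : measurable A -> lam.-cara.-measurable A.
Proof.
move=> mA; apply: (smallest_sub _ _ mA); first exact: sigma_algebra_measurable.
by move=> O; exact: open_caratheodory.
Qed.

Let lebesgue_outer_semi_sigma_additive : semi_sigma_additive (lam : set T -> \bar R).
Proof.
move=> F mF tF mU; exact: (caratheodory_measure_sigma_additive
  (fun i => measurable_caratheodory (mF i)) tF (measurable_caratheodory mU)).
Qed.

HB.instance Definition _ := isMeasure.Build _ T R lam (outer_measure0 lam)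
  (outer_measure_ge0 lam) lebesgue_outer_semi_sigma_additive.

End lebesgue_measure_rV.

Section measurable_rV.
Variables (R : realType) (n : nat).
Local Notation V := 'rV[R]_n.
Local Notation T := (Rd R n).

Lemma measurable_rat_obox q : measurable (rat_obox q : set T).
Proof. apply: open_measurable_rV; exact: open_obox. Qed.

Lemma measurable_fun_subr :
  measurable_fun [set: T * T] (fun z : T * T => (z.1 - z.2 : V) : T).
Proof.
apply: (@measurability _ _ (T * T)%type T setT _ open); first reflexivity.
move=> _ [W oW <-]; rewrite setTI.
pose good q := forall u v : V, rat_obox q.1 u -> rat_obox q.2 v -> W (u - v).
have -> : (fun z : T * T => (z.1 - z.2 : V)) @^-1` W =
    \bigcup_(q in good) ((rat_obox q.1 : set T) `*` (rat_obox q.2 : set T)).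
  apply/seteqP; split=> [z /= Wz|z [q qW [z1 z2]]]; last exact: qW.
  have /nbhs_ballP[r r0 rW] : nbhs (z.1 - z.2) W by exact: open_nbhs_nbhs.
  have [q1 [z1 q1r]] := rat_obox_ball z.1 (divr_gt0 r0 (ltr0n _ 2)).
  have [q2 [z2 q2r]] := rat_obox_ball z.2 (divr_gt0 r0 (ltr0n _ 2)).
  exists (q1, q2) => // u v /q1r/ball_coord uz /q2r/ball_coord vz.
  apply: rW; apply: coord_ball => // i; have := uz i; have := vz i; rewrite !mxE.
  move=> vzi uzi; rewrite (splitr r).
  have -> : z.1 0 i - z.2 0 i - (u 0 i - v 0 i) = (z.1 0 i - u 0 i) - (z.2 0 i - v 0 i).
    by ring.
  exact: le_lt_trans (ler_normB _ _) (ltrD uzi vzi).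
rewrite bigcup_mkcond; apply: countable_bigcupT_measurable => [|q].
  exact: countableP.
by case: ifP => _; [apply: measurableX; exact: measurable_rat_obox | exact: measurable0].
Qed.

Lemma locally_finite_sigma_finite (mu : {measure set T -> \bar R}) :
  locally_finite mu -> sigma_finite [set: T] mu.
Proof.
move=> mufin.
pose F k : set T := if unpickle k is Some q then
  (if (mu (rat_obox q) < +oo)%E then rat_obox q else set0) else set0.
exists F => [|k]; last first.
  rewrite /F; case: unpickle => [q|]; last by rewrite measure0.
  by case: ifPn => qfin; split; rewrite ?measure0 //; exact: measurable_rat_obox.
apply/seteqP; split => // x _; have [U [oU Ux Ufin]] := mufin x.
have /nbhs_ballP[r r0 rU] : nbhs x U by exact: open_nbhs_nbhs.
have [q [qx qr]] := rat_obox_ball x r0.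
exists (pickle q) => //; rewrite /F pickleK ifT //.
apply: le_lt_trans Ufin; apply: le_measure; rewrite ?inE //.
- exact: measurable_rat_obox.
- exact: open_measurable_rV.
- exact: subset_trans qr rU.
Qed.

End measurable_rV.

Section lebesgue_sigma_finite.
Variables (R : realType) (d : nat).
Local Notation V := 'rV[R]_d.+1.
Local Notation lam := (@lebesgue_outer R d).

Lemma lebesgue_outer_ball_lt (x : V) (r : R) : (lam (ball x r) < +oo)%E.
Proof.
pose c : V := const_mx `|r|.
have xc : coord_le (x - c) (x + c).
  by move=> i; rewrite !mxE lerD2l; have := normr_ge0 r; lra.
apply: le_lt_trans (ltry (box_vol (x - c) (x + c))).
apply: le_trans (lebesgue_outer_box xc); apply: le_outer_measure => y /ball_coord xy i.
have := xy i; rewrite !mxE ltr_norml => /andP[xy1 xy2].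
by have := ler_norm r => rr; apply/andP; split; lra.
Qed.

Lemma bounded_lebesgue_outer_lt (A : set V) : bounded_set A -> (lam A < +oo)%E.
Proof.
move=> [M [_ /(_ (`|M| + 1)) AM]].
have {AM} AM : A `<=` [set x | `|x| <= `|M| + 1].
  by apply: AM; rewrite (le_lt_trans (ler_norm M)) // ltrDl.
apply: le_lt_trans (lebesgue_outer_ball_lt 0 (`|M| + 2)).
apply: le_outer_measure => x /AM /= xM; rewrite mx_norm_ball /ball_ /= sub0r normrN.
by apply: le_lt_trans xM _; rewrite ltrD2l ltr1n.
Qed.

Lemma lebesgue_locally_finite : locally_finite lam.
Proof.
move=> x; exists (ball x 1).
by split; [exact: ball_open | exact: ballxx | exact: lebesgue_outer_ball_lt].
Qed.

HB.instance Definition _ := Measure_isSigmaFinite.Build _ _ _ lam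
  (locally_finite_sigma_finite lebesgue_locally_finite).

End lebesgue_sigma_finite.

Section translation_continuity.
Variables (R : realType) (d : nat).
Local Notation V := 'rV[R]_d.+1.
Local Notation T := (Rd R d.+1).
Local Notation lam := (@lebesgue_outer R d).

Lemma diff_translate_subset (A C U : set V) (h : V) : A `<=` C -> U `<=` C ->
  A `\` translate A h `<=` (C `\` U) `|` (U `\` translate U h) `|` translate (C `\` A) h.
Proof.
move=> AsubC UsubC x [Ax Ahx].
have [Ux|] := pselect (U x); last by left; left; split=> //; exact: AsubC.
have [[y Uy yx]|Uhx] := pselect (translate U h x); last by left; right.
by right; exists y => //; split; [exact: UsubC | move=> Ay; apply: Ahx; exists y].
Qed.

Lemma translate_subset (B A : set V) (t y : V) :
  B `&` translate A t `<=`
  (B `&` translate A y) `|` translate (A `\` translate A (y - t)) t.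
Proof.
move=> x [Bx [z Az zt]]; have [Ayx|nAy] := pselect (translate A y x); first by left.
rewrite -zt in nAy *.
right; exists z => //; split=> // -[w Aw wyt]; apply: nAy; exists w => //.
by rewrite -wyt -addrA subrK.
Qed.

Definition box_half_surface (a b : V) : R := \sum_i \prod_(j | j != i) (b 0 j - a 0 j).

Lemma box_half_surface_ge0 (a b : V) : coord_le a b -> 0 <= box_half_surface a b.
Proof.
by move=> ab; apply: sumr_ge0 => i _; apply: prodr_ge0 => j _; rewrite subr_ge0.
Qed.

Definition box_slabs (a b : V) (del : R) (i : 'I_d.+1) : set V :=
  box a (map_coord b i (fun=> a 0 i + del)) `|` box (map_coord a i (fun=> b 0 i - del)) b.

Lemma box_diff_translate_subset (a b h : V) (del : R) : (forall i, `|h 0 i| <= del) ->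
  box a b `\` translate (box a b) h `<=`
  \big[setU/set0]_(k < d.+1) box_slabs a b del (inord k).
Proof.
move=> hdel; rewrite -(bigcup_mkord _ (fun k => box_slabs a b del (inord k))).
move=> x [abx abhx].
have [i xhi] : exists i, ~ (a 0 i <= x 0 i - h 0 i <= b 0 i).
  apply/existsNP => abxh; apply: abhx; exists (x - h); last by rewrite subrK.
  by move=> i; rewrite !mxE; exact: abxh.
exists (val i) => //=; rewrite inord_val.
have /andP[ax xb] := abx i; have := hdel i; rewrite ler_norml => /andP[hi1 hi2].
have [xha|axh] := ltP (x 0 i - h 0 i) (a 0 i).
  left => j; rewrite !map_coordE; case: ifP => [/eqP ->|_]; last exact: abx.
  by rewrite ax /=; lra.
have bxh : b 0 i < x 0 i - h 0 i.
  by rewrite ltNge; apply/negP => xhb; apply: xhi; rewrite axh.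
right => j; rewrite !map_coordE; case: ifP => [/eqP ->|_]; last exact: abx.
by rewrite xb andbT; lra.
Qed.

Local Open Scope ereal_scope.

Lemma lebesgue_outer_box_slabs (a b : V) (del : R) i : coord_le a b -> (0 <= del)%R ->
  lam (box_slabs a b del i) <= (2 * del * \prod_(j | j != i) (b 0 j - a 0 j))%:E.
Proof.
move=> ab del0; rewrite /box_slabs.
rewrite -[in box a _](map_coord_id a i) -[in box _ b](map_coord_id b i).
have slab_le f g :
    (f (a 0 i) <= g (b 0 i))%R -> coord_le (map_coord a i f) (map_coord b i g).
  by move=> fg j; rewrite !map_coordE; case: ifP => // /eqP ->.
apply: le_trans (outer_measureU2 lam _ _) _.
apply: le_trans (leeD (lebesgue_outer_box (slab_le _ _ _))
                      (lebesgue_outer_box (slab_le _ _ _))) _.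
- by rewrite /= map_coordE eqxx lerDl.
- by rewrite /= map_coordE eqxx lerBlDr lerDl.
rewrite !box_vol_map_coord !map_coordE eqxx -EFinD lee_fin /=.
set P := (\prod_(_ < _ | _) _)%R.
by rewrite (_ : _ + _ = 2 * del * P)%R //; ring.
Qed.

Lemma lebesgue_outer_box_diff_translate (a b h : V) (del : R) :
  coord_le a b -> (forall i, `|h 0 i| <= del)%R ->
  lam (box a b `\` translate (box a b) h) <= (2 * del * box_half_surface a b)%:E.
Proof.
move=> ab hdel; have del0 : (0 <= del)%R := le_trans (normr_ge0 _) (hdel ord0).
apply: le_trans (le_outer_measure lam _ _ (box_diff_translate_subset hdel)) _.
apply: le_trans (outer_measure_subadditive lam (fun k => box_slabs a b del (inord k)) _) _.
rewrite /box_half_surface mulr_sumr -sumEFin; apply: lee_sum => i _.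
by rewrite inord_val; exact: lebesgue_outer_box_slabs.
Qed.

Definition box_union (F : nat -> V * V) (I : set nat) : set V :=
  \bigcup_(n in I) box (F n).1 (F n).2.

Lemma lebesgue_outer_box_union_diff_translate (F : nat -> V * V) N (h : V) (del : R) :
  (forall n, coord_le (F n).1 (F n).2) -> (forall i, `|h 0 i| <= del)%R ->
  lam (box_union F `I_N `\` translate (box_union F `I_N) h)
    <= (2 * del * \sum_(n < N) box_half_surface (F n).1 (F n).2)%:E.
Proof.
move=> F12 hdel; pose G n := box (F n).1 (F n).2 `\` translate (box (F n).1 (F n).2) h.
have sub : box_union F `I_N `\` translate (box_union F `I_N) h `<=`
           \big[setU/set0]_(n < N) G n.
  rewrite -bigcup_mkord => x [[n nN Fx] Uhx]; exists n => //; split => // -[y Fy yx].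
  by apply: Uhx; exists y => //; exists n.
apply: le_trans (le_outer_measure lam _ _ sub) _.
apply: le_trans (outer_measure_subadditive lam G N) _.
rewrite mulr_sumr -sumEFin; apply: lee_sum => n _.
exact: lebesgue_outer_box_diff_translate.
Qed.

Lemma measurable_box_union (F : nat -> V * V) (I : set nat) :
  measurable (box_union F I : set T).
Proof. by apply: bigcup_measurable => n _; exact: box_measurable. Qed.

Lemma box_union_tail (F : nat -> V * V) (e : R) :
  lam (box_union F setT) < +oo -> (0 < e)%R ->
  exists N, lam (box_union F setT `\` box_union F `I_N) < e%:E.
Proof.
move=> Ufin e0; pose D N : set T := box_union F setT `\` box_union F `I_N.
have D0 : D 0%N = box_union F setT by rewrite /D /box_union II0 bigcup_set0 setD0.
have mD N : measurable (D N) by apply: measurableD; exact: measurable_box_union.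
have DN0 : \bigcap_N D N = set0.
  apply/seteqP; split => // x DNx; have [[n _ Fx] _] := DNx 0%N I.
  have [_ nFx] := DNx n.+1 I.
  by apply: nFx; exists n => /=.
have decD : nonincreasing_seq D.
  move=> m n mn; apply/subsetPset => x [Ux mFx]; split => // -[k /= km Fx].
  by apply: mFx; exists k => //=; exact: leq_trans km mn.
have /(nonincreasing_cvg_mu (mu := lam)) : lam (D 0%N) < +oo by rewrite D0.
rewrite DN0 measure0 => /(_ mD measurable0 decD) D_cvg.
have [//|noN] := pselect (exists N, lam (D N) < e%:E).
suff : e%:E <= 0 by rewrite lee_fin leNgt e0.
apply: cvge_to_ge D_cvg _; apply: nearW => N /=.
by rewrite leNgt; apply/negP => DNe; apply: noN; exists N.
Qed.

Lemma finite_box_approx (A : set T) (e : R) :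
  measurable A -> lam A < +oo -> (0 < e)%R ->
  exists F N, [/\ forall n, coord_le (F n).1 (F n).2, A `<=` box_union F setT,
    lam (box_union F setT `\` A) < e%:E &
    lam (box_union F setT `\` box_union F `I_N) < e%:E].
Proof.
move=> mA Afin e0.
have Afin' : lam A \is a fin_num by rewrite ge0_fin_numE ?outer_measure_ge0.
have [F [F12 AF] FAe] : exists2 F, box_cover A F & cover_vol F < lam A + e%:E.
  by apply: lebesgue_outer_gt_cover; rewrite lteDl // lte_fin.
have AU : A `<=` box_union F setT by move=> x /AF[n _ Fx]; exists n.
have UFA : lam (box_union F setT) < lam A + e%:E.
  by apply: le_lt_trans FAe; apply: lebesgue_outer_le_cover; split.
have [N UN] : exists N, lam (box_union F setT `\` box_union F `I_N) < e%:E.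
  apply: box_union_tail => //; apply: lt_trans UFA _.
  by rewrite -(fineK Afin') -EFinD ltry.
exists F, N; split=> //; move: UFA.
by rewrite (measureDI lam (measurable_box_union F setT) mA) (setIidr AU) addeC lteD2lE.
Qed.

Lemma lebesgue_outer_diff_translate_near0 (A : set T) (e : R) :
  measurable A -> lam A < +oo -> (0 < e)%R ->
  \forall h \near (0%R : V), lam (A `\` translate A h) < e%:E.
Proof.
move=> mA Afin e0; have e3 : (0 < e / 3)%R by rewrite divr_gt0.
have [F [N [F12 AU UA UN]]] := finite_box_approx mA Afin e3.
pose K := (\sum_(n < N) box_half_surface (F n).1 (F n).2)%R.
have [del del0 delK] : exists2 del : R, (0 < del)%R & (2 * del * K <= e / 3)%R.
  have K1 : (0 < K + 1)%R.
    by rewrite ltr_wpDl //; apply: sumr_ge0 => n _; exact: box_half_surface_ge0.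
  exists (e / (6 * (K + 1)))%R; first by rewrite divr_gt0 // mulr_gt0.
  rewrite (_ : 2 * _ * K = e / 3 * (K / (K + 1)))%R; last by field; rewrite gt_eqF.
  by rewrite ler_piMr ?(ltW e3) // ler_pdivrMr // mul1r lerDl.
apply/nbhs_ballP; exists del => // h /ball_coord h0.
have hdel i : (`|h 0 i| <= del)%R by have := h0 i; rewrite mxE sub0r normrN => /ltW.
have UNU : box_union F `I_N `<=` box_union F setT by move=> x [n _ Fx]; exists n.
have UhU : lam (box_union F `I_N `\` translate (box_union F `I_N) h) <= (e / 3)%:E.
  apply: le_trans (lebesgue_outer_box_union_diff_translate N F12 hdel) _.
  by rewrite lee_fin.
have UhUfin : lam (box_union F `I_N `\` translate (box_union F `I_N) h) \is a fin_num.
  by rewrite ge0_fin_numE ?outer_measure_ge0 ?(le_lt_trans UhU (ltry _)).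
apply: le_lt_trans (le_outer_measure lam _ _ (diff_translate_subset (h := h) AU UNU)) _.
apply: le_lt_trans (outer_measureU2 lam _ _) _; rewrite /= lebesgue_outer_translate.
rewrite (_ : e%:E = (e / 3)%:E + (e / 3)%:E + (e / 3)%:E); last first.
  by rewrite -!EFinD; congr EFin; field.
apply: lteD UA; apply: le_lt_trans (outer_measureU2 lam _ _) _.
exact: lte_leD UhUfin UN UhU.
Qed.

End translation_continuity.

(* [mu] with its sigma-finiteness registered as a structure instance, as the
   Fubini-Tonelli lemmas require. *)
Definition sigma_finite_copy d (T : measurableType d) (R : realType)
  (mu : {measure set T -> \bar R}) (_ : sigma_finite [set: T] mu) : set T -> \bar R := mu.

Section sigma_finite_copy.
Context d (T : measurableType d) (R : realType) (mu : {measure set T -> \bar R}).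
Variable mu_sfin : sigma_finite [set: T] mu.

HB.instance Definition _ := Measure.copy (sigma_finite_copy mu_sfin) mu.
HB.instance Definition _ :=
  Measure_isSigmaFinite.Build _ _ _ (sigma_finite_copy mu_sfin) mu_sfin.

End sigma_finite_copy.

Lemma msupport_ae_nbhs (R : realType) n (mu : {measure set (Rd R n) -> \bar R})
    (t : 'rV[R]_n) (P : 'rV[R]_n -> Prop) :
  msupport mu t -> {ae mu, forall y, P y} ->
  forall U, open U -> U t -> exists2 y, U y & P y.
Proof.
move=> tmu [N [mN N0 PN]] U oU Ut.
have [//|noP] := pselect (exists2 y, U y & P y).
have := tmu U oU Ut; rewrite lt_neqAle eq_sym => /andP[/negP []].
rewrite eq_le measure_ge0 andbT -N0 le_measure ?inE //; first exact: open_measurable_rV.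
by move=> y Uy; apply: PN => Py; apply: noP; exists y.
Qed.

Section convolution_support.
Variables (R : realType) (d : nat).
Local Notation V := 'rV[R]_d.+1.
Local Notation T := (Rd R d.+1).
Local Notation lam := (@lebesgue_outer R d).
Variables (Om Sig : set T) (mu : {measure set T -> \bar R}).
Hypotheses (mOm : measurable Om) (mufin : locally_finite mu).

Local Notation musf := (sigma_finite_copy (locally_finite_sigma_finite mufin)).

Let diff_in_Om : set (T * T) := [set z | Om (z.1 - z.2 : V)].

Let measurable_diff_in_Om : measurable diff_in_Om.
Proof. by have := measurable_fun_subr measurableT mOm; rewrite setTI. Qed.

Let conv_ind_fubini x :
  conv_ind mu Om x = fubini_F musf (EFin \o \1_diff_in_Om) x.
Proof. by apply: eq_integral => y _; rewrite /= indicE. Qed.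

Lemma measurable_conv_ind_eq0 : measurable [set x : T | conv_ind mu Om x = 0%E].
Proof.
have := indic_measurable_fun_fubini_tonelli_F musf measurable_diff_in_Om measurableT
  (emeasurable_set1 0%E).
by rewrite setTI; congr measurable; apply/seteqP; split => x /=; rewrite conv_ind_fubini.
Qed.

Hypothesis mSig : measurable Sig.

Let conv_null : set T := ~` Sig `&` [set x | conv_ind mu Om x = 0%E].

Let pairs : set (T * T) := (conv_null `*` setT) `&` diff_in_Om.

Let measurable_pairs : measurable pairs.
Proof.
apply: measurableI => //; apply: measurableX => //.
by apply: measurableI; [exact: measurableC | exact: measurable_conv_ind_eq0].
Qed.

Let ysection_pairs (y : V) : ysection pairs y = conv_null `&` translate Om y.
Proof.
apply/seteqP; split=> [x|x [Bx [z Omz zyx]]]; rewrite /ysection /= inE.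
  by move=> [[Bx _] Omxy]; split=> //; exists (x - y); rewrite ?subrK.
by split; [split | rewrite /diff_in_Om /= -zyx addrK].
Qed.

Let xsection_pairs_null (x : T) : musf (xsection pairs x) = 0%E.
Proof.
have [[nSx cx0]|nBx] := pselect (conv_null x); last first.
  rewrite (_ : xsection _ _ = set0) ?measure0 //; apply/seteqP; split=> // y.
  by rewrite /xsection /= inE => -[[]].
rewrite -cx0 conv_ind_fubini indic_fubini_tonelli_FE //=; congr musf; apply/seteqP.
by split=> y; rewrite /xsection /= !inE; [case | split].
Qed.

Lemma ae_conv_null_translate :
  {ae musf, forall y : V, lam (conv_null `&` translate Om y) = 0%E}.
Proof.
pose psi y := lam (ysection pairs y).
have psi0 : (\int[musf]_y psi y = 0)%E.
  have := indic_fubini_tonelli lam musf measurable_pairs.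
  rewrite indic_fubini_tonelli_FE // indic_fubini_tonelli_GE // => <-.
  by rewrite (eq_integral (fun=> 0%E)) ?integral0 // => x _; exact: xsection_pairs_null.
have mpsi : measurable_fun [set: T] psi.
  have := indic_measurable_fun_fubini_tonelli_G lam measurable_pairs.
  by rewrite indic_fubini_tonelli_GE.
have /(ae_eq_integral_abs musf measurableT mpsi).1 : (\int[musf]_y `|psi y| = 0)%E.
  by rewrite -psi0; apply: eq_integral => y _; rewrite gee0_abs.
by apply: filterS => y /(_ I); rewrite /psi ysection_pairs.
Qed.

Hypothesis bOm : bounded_set (Om : set V).

Lemma conv_null_translate_msupport (t : V) :
  msupport mu t -> lam (conv_null `&` translate Om t) = 0%E.
Proof.
move=> tmu; apply/eqP; rewrite eq_le outer_measure_ge0 andbT.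
apply/lee_addgt0Pr => e e0; rewrite add0e.
have /nbhs_ballP[r r0 rOm] :=
  lebesgue_outer_diff_translate_near0 mOm (bounded_lebesgue_outer_lt bOm) e0.
have [y rty psiy] :=
  msupport_ae_nbhs tmu ae_conv_null_translate (ball_open t r) (ballxx t r0).
apply: le_trans (le_outer_measure lam _ _ (@translate_subset R d _ _ t y)) _.
apply: le_trans (outer_measureU2 lam _ _) _.
rewrite /= psiy add0e lebesgue_outer_translate.
apply/ltW/rOm; apply: coord_ball => // i; rewrite !mxE sub0r opprB.
exact: ball_coord rty i.
Qed.

Lemma translate_diff_lebesgue_null :
  lebesgue_null [set x : V | ~ Sig x /\ conv_ind mu Om x <> 0%E] ->
  forall t : V, msupport mu t -> lebesgue_null (translate Om t `&` ~` (Sig : set V)).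
Proof.
move=> /lebesgue_nullE N0 t tmu; apply/lebesgue_nullE/eqP.
rewrite eq_le outer_measure_ge0 andbT.
have sub : translate Om t `&` ~` Sig `<=`
    [set x : V | ~ Sig x /\ conv_ind mu Om x <> 0%E] `|` (conv_null `&` translate Om t).
  move=> x [Omx nSx]; have [cx0|cx0] := eqVneq (conv_ind mu Om x) 0%E.
    by right.
  by left; split => //; exact/eqP.
apply: le_trans (le_outer_measure lam _ _ sub) _.
apply: le_trans (outer_measureU2 lam _ _) _.
by rewrite /= N0 conv_null_translate_msupport // adde0.
Qed.

End convolution_support.

(* In dimension 0 every box has volume 1 (an empty product): no set is null. *)
Lemma lebesgue_null_rV0 (R : realType) (A : set 'rV[R]_0) : ~ lebesgue_null A.
Proof.
move=> /(_ 1 ltr01) [a [b [_ _]]]; apply/negP; rewrite -leNgt.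
apply: le_trans (nneseries_lim_ge 1 _) => [|n _ _].
  by rewrite big_nat1 /box_vol big_ord0.
by rewrite /box_vol big_ord0 lee_fin.
Qed.

Unset Implicit Arguments.
Theorem lemma2p5 (R : realType) (d : nat) (Om Sig : set (Rd R d))
  (mu : {measure set (Rd R d) -> \bar R}) :
  measurable Om -> bounded_set (Om : set 'rV[R]_d) ->
  locally_finite mu ->
  measurable Sig ->
  lebesgue_null [set x : 'rV[R]_d | ~ Sig x /\ conv_ind mu Om x <> 0%E] ->
  forall t : 'rV[R]_d, msupport mu t ->
    lebesgue_null (translate Om t `&` ~` (Sig : set 'rV[R]_d)).
Proof.
case: d Om Sig mu => [|d] Om Sig mu mOm bOm mufin mSig.
  by move=> /lebesgue_null_rV0.
exact: translate_diff_lebesgue_null.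
Qed.
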